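(* (a) With $q_n=t_n-1$ and $r_n=t_n+\tfrac13$ for $n\ge0$ (i.e. $q_n\in\{-1,0\}$, $r_n\in\{\tfrac13,\tfrac43\}$ according as $t_n=0$ or $1$): $$5\sum_{n\ge1}\frac{q_{n-1}}{n^2}=-3\sum_{n\ge1}\frac{r_n}{n^2}.$$ (b) With $q_n=t_n-1$ and $r_n=t_n+\tfrac97$ for $n\ge0$: $$\sum_{n\ge1}\frac{9q_{n-1}+7r_n}{n^3}=8\zeta(3).$$ (c) With $q_n=t_n-\sqrt2$ and $r_n=t_n+\frac{17\sqrt2-2}{15}$ for $n\ge0$ (i.e. $q_n\in\{-\sqrt2,1-\sqrt2\}$, $r_n\in\{\frac{17\sqrt2-2}{15},\frac{17\sqrt2+13}{15}\}$): $$\sum_{n\ge1}\frac{17q_{n-1}+15r_n}{n^4}=16\,\eta(4).$$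
   Context: For $n\ge 0$, let $t_n\in\{0,1\}$ denote the sum of the binary digits of $n$ reduced modulo $2$ (so $t_0=0$; this is the Thue–Morse sequence). $\zeta(s)=\sum_{n\ge1}n^{-s}$ is the Riemann zeta function and $\eta(s)=\sum_{n\ge1}(-1)^{n-1}n^{-s}$ is the Dirichlet eta function. *)

From Stdlib Require Import Reals ZArith NArith.
From Coquelicot Require Import Coquelicot.
Open Scope R_scope.

Fixpoint pos_tm (p : positive) : bool :=
  match p with
  | xH => true
  | xO p' => pos_tm p'
  | xI p' => negb (pos_tm p')
  end.

(* Thue–Morse sequence t_n in {0,1}: binary digit sum of n mod 2 (t_0 = 0). *)
Definition tm_bool (n : nat) : bool :=
  match N.of_nat n with
  | N0 => false
  | Npos p => pos_tm p
  end.

Definition t (n : nat) : R := if tm_bool n then 1 else 0.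

Definition zeta (s : nat) : R := Series (fun n : nat => / (INR (n + 1)) ^ s).

(* Dirichlet eta at a positive integer s: sum_{n>=1} (-1)^{n-1} n^{-s}. *)
Definition eta (s : nat) : R := Series (fun n : nat => (-1) ^ n / (INR (n + 1)) ^ s).

From Stdlib Require Import Reals.
From Coquelicot Require Import Coquelicot.
From Stdlib Require Import NArith Lia Lra.
Open Scope R_scope.

(** Write [T(s) = sum t_n n^-s] and [T'(s) = sum t_(n-1) n^-s] (sums over
    [n >= 1]).  Since [t_2m = t_m] and [t_(2m+1) = 1 - t_m], the coefficient
    [t_n + t_(n-1) - 1] vanishes for odd [n] and equals [t_m - t_(m-1)] for
    [n = 2m]; grouping the terms in pairs gives the functional equation
    [T + T' - zeta = 2^-s (T - T')].  Pairing the terms of [eta - zeta] in the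
    same way gives [eta(s) = (1 - 2^(1-s)) zeta(s)].  Each of the three
    identities is a linear combination of these relations for s = 2, 3, 4. *)

Lemma tm_bool_double n : tm_bool (2 * n) = tm_bool n.
Proof.
  unfold tm_bool. rewrite Nat2N.inj_double. now destruct (N.of_nat n).
Qed.

Lemma tm_bool_double_succ n : tm_bool (2 * n + 1) = negb (tm_bool n).
Proof.
  unfold tm_bool. rewrite Nat.add_1_r, Nat2N.inj_succ_double.
  now destruct (N.of_nat n).
Qed.

Lemma t_double n : t (2 * n) = t n.
Proof. unfold t. now rewrite tm_bool_double. Qed.

Lemma t_double_succ n : t (2 * n + 1) = 1 - t n.
Proof. unfold t. rewrite tm_bool_double_succ. destruct (tm_bool n); simpl; lra. Qed.

Lemma t_bounds n : 0 <= t n <= 1.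
Proof. unfold t. destruct (tm_bool n); lra. Qed.

Lemma sum_n_pairs (a : nat -> R) m :
  sum_n (fun j => a (2 * j)%nat + a (2 * j + 1)%nat) m = sum_n a (2 * m + 1).
Proof.
  induction m as [|m IH].
  - change (2 * 0 + 1)%nat with 1%nat. now rewrite sum_O, sum_Sn, sum_O.
  - replace (2 * S m + 1)%nat with (S (S (2 * m + 1))) by lia.
    rewrite sum_Sn, IH, !sum_Sn.
    replace (2 * S m)%nat with (S (2 * m + 1)) by lia.
    replace (S (2 * m + 1) + 1)%nat with (S (S (2 * m + 1))) by lia.
    unfold plus; simpl; ring.
Qed.

Lemma is_series_pairs (a : nat -> R) l :
  is_series a l -> is_series (fun m => a (2 * m)%nat + a (2 * m + 1)%nat) l.
Proof.
  intro Ha. unfold is_series.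
  apply (filterlim_ext (fun m => sum_n a (2 * m + 1))).
  { intro m. now rewrite sum_n_pairs. }
  apply (filterlim_comp _ _ _ (fun m => (2 * m + 1)%nat) (sum_n a) _ eventually).
  - apply eventually_subseq. intro; lia.
  - exact Ha.
Qed.

Lemma Series_pairs (a : nat -> R) :
  ex_series a -> Series (fun m => a (2 * m)%nat + a (2 * m + 1)%nat) = Series a.
Proof.
  intro Ha. apply is_series_unique, is_series_pairs, Series_correct, Ha.
Qed.

Lemma is_series_telescoping (b : nat -> R) :
  is_lim_seq b 0 -> is_series (fun k => b k - b (S k)) (b O).
Proof.
  intro Hb.
  assert (Hsum : forall n, sum_n (fun k => b k - b (S k)) n = b O - b (S n)).
  { induction n as [|n IH].
    - now rewrite sum_O.
    - rewrite sum_Sn, IH. unfold plus; simpl; ring. }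
  apply (filterlim_ext (fun n => b O - b (S n))); [intro; now rewrite Hsum|].
  assert (Hlim : is_lim_seq (fun n => b O - b (S n)) (b O - 0)).
  { apply is_lim_seq_minus'; [apply is_lim_seq_const|].
    now apply is_lim_seq_incr_1 in Hb. }
  rewrite Rminus_0_r in Hlim. exact Hlim.
Qed.

Lemma is_lim_seq_inv_succ : is_lim_seq (fun k => / INR (k + 1)) 0.
Proof.
  change (Finite 0) with (Rbar_inv p_infty).
  apply is_lim_seq_inv; [|discriminate].
  apply (is_lim_seq_ext (fun k => INR (S k))); [intro; now rewrite Nat.add_1_r|].
  apply (is_lim_seq_incr_1 INR), is_lim_seq_INR.
Qed.

Lemma ex_series_inv_sqr : ex_series (fun k => / INR (k + 1) ^ 2).
Proof.
  set (b := fun k => 2 / INR (k + 1)).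
  apply (@ex_series_le R_AbsRing R_CompleteNormedModule _ (fun k => b k - b (S k))).
  - intro k. unfold b.
    replace (INR (S k + 1)) with (INR (k + 1) + 1) by (rewrite !plus_INR, (S_INR k); ring).
    assert (1 <= INR (k + 1)) by (rewrite plus_INR; simpl; pose proof (pos_INR k); lra).
    set (x := INR (k + 1)) in *.
    unfold norm; simpl; unfold abs; simpl.
    rewrite Rabs_pos_eq by (apply Rlt_le, Rinv_0_lt_compat; nra).
    apply Rmult_le_reg_r with (x * x * (x + 1)); [nra|].
    field_simplify; lra.
  - exists (b O). apply is_series_telescoping.
    unfold b. rewrite <- (Rmult_0_r 2).
    apply (is_lim_seq_scal_l _ 2 0), is_lim_seq_inv_succ.
Qed.

Lemma ex_series_bounded_div_pow (c : nat -> R) M s :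
  (2 <= s)%nat -> (forall k, Rabs (c k) <= M) ->
  ex_series (fun k => c k / INR (k + 1) ^ s).
Proof.
  intros Hs Hc.
  apply (@ex_series_le R_AbsRing R_CompleteNormedModule _
           (fun k => M * / INR (k + 1) ^ 2)).
  - intro k. unfold norm; simpl; unfold abs; simpl.
    assert (1 <= INR (k + 1)) by (rewrite plus_INR; simpl; pose proof (pos_INR k); lra).
    set (x := INR (k + 1)) in *.
    assert (x ^ 2 <= x ^ s) by (apply Rle_pow; auto).
    assert (0 < x ^ 2) by (apply pow_lt; lra).
    unfold Rdiv. rewrite Rabs_mult, Rabs_inv, (Rabs_pos_eq (x ^ s)) by lra.
    apply Rmult_le_compat; auto using Rabs_pos.
    + apply Rlt_le, Rinv_0_lt_compat; lra.
    + apply Rinv_le_contravar; lra.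
  - apply (ex_series_scal_l M (fun k => / INR (k + 1) ^ 2)), ex_series_inv_sqr.
Qed.

(* [T(s)] and [T'(s)]: term [k] is the term of index [n = k + 1]. *)
Definition tm_dirichlet (s : nat) : R := Series (fun k => t (k + 1) / INR (k + 1) ^ s).
Definition tm_dirichlet_shift (s : nat) : R := Series (fun k => t k / INR (k + 1) ^ s).

Section TmDirichlet.

Variable s : nat.
Hypothesis s_ge2 : (2 <= s)%nat.

Lemma pow_INR_succ_neq0 k : INR (k + 1) ^ s <> 0.
Proof. apply pow_nonzero, not_0_INR. lia. Qed.

Lemma ex_series_inv_pow : ex_series (fun k => / INR (k + 1) ^ s).
Proof.
  apply (ex_series_ext (fun k => 1 / INR (k + 1) ^ s)); [intro; apply Rmult_1_l|].
  apply (ex_series_bounded_div_pow _ 1); [exact s_ge2|]. intro; rewrite Rabs_R1; lra.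
Qed.

Lemma is_series_tm_combination x y c (a : nat -> R) :
  (forall k, a k = (x * t (k + 1) + y * t k + c) / INR (k + 1) ^ s) ->
  is_series a (x * tm_dirichlet s + y * tm_dirichlet_shift s + c * zeta s).
Proof.
  intro Ha. unfold tm_dirichlet, tm_dirichlet_shift, zeta.
  set (u := fun k => t (k + 1) / INR (k + 1) ^ s).
  set (v := fun k => t k / INR (k + 1) ^ s).
  set (z := fun k => / INR (k + 1) ^ s).
  assert (Hu : ex_series u).
  { apply (ex_series_bounded_div_pow _ 1); [exact s_ge2|].
    intro k; pose proof (t_bounds (k + 1)); rewrite Rabs_pos_eq; lra. }
  assert (Hv : ex_series v).
  { apply (ex_series_bounded_div_pow _ 1); [exact s_ge2|].
    intro k; pose proof (t_bounds k); rewrite Rabs_pos_eq; lra. }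
  assert (Hxu : ex_series (fun k => x * u k)) by apply (ex_series_scal_l x u Hu).
  assert (Hyv : ex_series (fun k => y * v k)) by apply (ex_series_scal_l y v Hv).
  assert (Hcz : ex_series (fun k => c * z k))
    by apply (ex_series_scal_l c z ex_series_inv_pow).
  assert (Hxuyv : ex_series (fun k => x * u k + y * v k))
    by apply (ex_series_plus _ _ Hxu Hyv).
  assert (Hsum : ex_series (fun k => x * u k + y * v k + c * z k))
    by apply (ex_series_plus _ _ Hxuyv Hcz).
  assert (Ha' : forall k, x * u k + y * v k + c * z k = a k)
    by (intro k; rewrite Ha; unfold u, v, z, Rdiv; ring).
  apply (is_series_ext _ _ _ Ha').
  rewrite <- (Series_scal_l x u), <- (Series_scal_l y v), <- (Series_scal_l c z),
    <- (Series_plus _ _ Hxu Hyv), <- (Series_plus _ _ Hxuyv Hcz).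
  apply Series_correct, Hsum.
Qed.

Lemma tm_dirichlet_functional_equation :
  2 ^ s * (tm_dirichlet s + tm_dirichlet_shift s - zeta s)
  = tm_dirichlet s - tm_dirichlet_shift s.
Proof.
  set (w := fun k => (1 * t (k + 1) + 1 * t k + -1) / INR (k + 1) ^ s).
  assert (Hw : is_series w (1 * tm_dirichlet s + 1 * tm_dirichlet_shift s + -1 * zeta s))
    by (apply is_series_tm_combination; reflexivity).
  assert (Hpairs : forall m, w (2 * m)%nat + w (2 * m + 1)%nat
            = (/ 2 ^ s * t (m + 1) + - / 2 ^ s * t m + 0) / INR (m + 1) ^ s).
  { intro m. unfold w.
    replace (2 * m + 1 + 1)%nat with (2 * (m + 1))%nat by lia.
    rewrite t_double_succ, !t_double, mult_INR, Rpow_mult_distr.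
    replace (INR 2) with 2 by (simpl; ring).
    pose proof (pow_INR_succ_neq0 (2 * m)). pose proof (pow_INR_succ_neq0 m).
    assert (2 ^ s <> 0) by (apply pow_nonzero; lra).
    field; auto. }
  assert (Hhalf := is_series_ext _ _ _ Hpairs (is_series_pairs _ _ Hw)).
  assert (Hhalf' := is_series_tm_combination (/ 2 ^ s) (- / 2 ^ s) 0 _ (fun _ => eq_refl)).
  apply is_series_unique in Hhalf. apply is_series_unique in Hhalf'.
  replace (tm_dirichlet s + tm_dirichlet_shift s - zeta s)
    with (/ 2 ^ s * tm_dirichlet s + - / 2 ^ s * tm_dirichlet_shift s + 0 * zeta s)
    by (rewrite <- Hhalf', Hhalf; ring).
  field. apply pow_nonzero; lra.
Qed.

Lemma eta_zeta : 2 ^ s * eta s = (2 ^ s - 2) * zeta s.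
Proof.
  unfold eta, zeta.
  set (e := fun k => (-1) ^ k / INR (k + 1) ^ s).
  set (z := fun k => / INR (k + 1) ^ s).
  assert (He : ex_series e).
  { apply (ex_series_bounded_div_pow _ 1); [exact s_ge2|].
    intro; rewrite pow_1_abs; lra. }
  assert (Hz : ex_series z) by exact ex_series_inv_pow.
  assert (Hpairs : forall m,
            e (2 * m)%nat - z (2 * m)%nat + (e (2 * m + 1)%nat - z (2 * m + 1)%nat)
            = -2 / 2 ^ s * z m).
  { intro m. unfold e, z.
    replace ((-1) ^ (2 * m + 1)) with (-1) by (rewrite Nat.add_1_r; now rewrite pow_1_odd).
    replace (2 * m + 1 + 1)%nat with (2 * (m + 1))%nat by lia.
    rewrite pow_1_even, mult_INR, Rpow_mult_distr.
    replace (INR 2) with 2 by (simpl; ring).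
    pose proof (pow_INR_succ_neq0 (2 * m)). pose proof (pow_INR_succ_neq0 m).
    assert (2 ^ s <> 0) by (apply pow_nonzero; lra).
    field; auto. }
  assert (Hdiff := Series_pairs (fun k => e k - z k) (ex_series_minus _ _ He Hz)).
  cbv beta in Hdiff.
  rewrite (Series_ext _ _ Hpairs), Series_scal_l, (Series_minus _ _ He Hz) in Hdiff.
  replace (Series e) with (Series z + -2 / 2 ^ s * Series z) by lra.
  field. apply pow_nonzero; lra.
Qed.

End TmDirichlet.

Theorem proposition5 :
  (let q := fun n : nat => t n - 1 in
   let r := fun n : nat => t n + 1 / 3 in
   let A := fun k : nat => q k / (INR (k + 1)) ^ 2 in
   let B := fun k : nat => r (k + 1)%nat / (INR (k + 1)) ^ 2 in
   ex_series A /\ ex_series B /\ 5 * Series A = - 3 * Series B)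
  /\
  (let q := fun n : nat => t n - 1 in
   let r := fun n : nat => t n + 9 / 7 in
   let C := fun k : nat => (9 * q k + 7 * r (k + 1)%nat) / (INR (k + 1)) ^ 3 in
   ex_series C /\ Series C = 8 * zeta 3)
  /\
  (let q := fun n : nat => t n - sqrt 2 in
   let r := fun n : nat => t n + (17 * sqrt 2 - 2) / 15 in
   let D := fun k : nat => (17 * q k + 15 * r (k + 1)%nat) / (INR (k + 1)) ^ 4 in
   ex_series D /\ Series D = 16 * eta 4).
Proof.
  split; [|split]; intros q r.
  - intros A B.
    assert (HA : is_series A (0 * tm_dirichlet 2 + 1 * tm_dirichlet_shift 2 + -1 * zeta 2))
      by (apply is_series_tm_combination; [lia | intro k; unfold A, q; f_equal; ring]).
    assert (HB : is_series B (1 * tm_dirichlet 2 + 0 * tm_dirichlet_shift 2 + 1 / 3 * zeta 2))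
      by (apply is_series_tm_combination; [lia | intro k; unfold B, r; f_equal; ring]).
    pose proof (tm_dirichlet_functional_equation 2 ltac:(lia)) as FE.
    split; [|split]; [eexists; exact HA | eexists; exact HB |].
    rewrite (is_series_unique _ _ HA), (is_series_unique _ _ HB). simpl in FE. lra.
  - intros C.
    assert (HC : is_series C (7 * tm_dirichlet 3 + 9 * tm_dirichlet_shift 3 + 0 * zeta 3))
      by (apply is_series_tm_combination; [lia | intro k; unfold C, q, r; f_equal; field]).
    pose proof (tm_dirichlet_functional_equation 3 ltac:(lia)) as FE.
    split; [eexists; exact HC |].
    rewrite (is_series_unique _ _ HC). simpl in FE. lra.
  - intros D.
    assert (HD : is_series D (15 * tm_dirichlet 4 + 17 * tm_dirichlet_shift 4 + -2 * zeta 4))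
      by (apply is_series_tm_combination; [lia | intro k; unfold D, q, r; f_equal; field]).
    pose proof (tm_dirichlet_functional_equation 4 ltac:(lia)) as FE.
    pose proof (eta_zeta 4 ltac:(lia)) as Heta.
    split; [eexists; exact HD |].
    rewrite (is_series_unique _ _ HD). simpl in FE, Heta. lra.
Qed.
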